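(* Let $G$ be a graph and $X$ an $\operatorname{IR}(G)$-set. Then every flip-set $X'$ of $X$ is also an $\operatorname{IR}(G)$-set.
   Context: All graphs are finite and simple. For a graph $G=(V,E)$, $D\subseteq V$ and $v\in D$, $\operatorname{PN}(v,D)=N[v]-N[D-\{v\}]$ (closed neighbourhoods) and the set of external private neighbours is $\operatorname{EPN}(v,D)=\operatorname{PN}(v,D)-D$. A set $D$ is irredundant if $\operatorname{PN}(v,D)\neq\varnothing$ for every $v\in D$; $\operatorname{IR}(G)$ is the largest cardinality of an irredundant set, and an $\operatorname{IR}(G)$-set is an irredundant set of that cardinality. Flip-set: given an irredundant set $X$, split $X$ into disjoint sets $Y$ and $Z$ (either possibly empty) with $X=Y\cup Z$, such that every vertex of $Z$ is isolated in the induced subgraph $G[X]$ and every vertex $y\in Y$ has $\operatorname{EPN}(y,X)\neq\varnothing$; choose $y'\in\operatorname{EPN}(y,X)$ for each $y\in Y$ and let $Y'=\{y':y\in Y\}$. Then $X'=(X-Y)\cup Y'$ is called a flip-set of $X$ (using $Y'$). *)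

From mathcomp Require Import all_boot.
Set Implicit Arguments. Unset Strict Implicit. Unset Printing Implicit Defensive.

Section Graph.
Variables (T : finType) (e : rel T).

Definition simple_graph := symmetric e /\ irreflexive e.

Definition cnbhd (v : T) : {set T} := [set u | (u == v) || e v u].
Definition cnbhdS (S : {set T}) : {set T} := \bigcup_(v in S) cnbhd v.

Definition PN (v : T) (D : {set T}) : {set T} := cnbhd v :\: cnbhdS (D :\ v).
Definition EPN (v : T) (D : {set T}) : {set T} := PN v D :\: D.

Definition irredundant (D : {set T}) : Prop := forall v, v \in D -> PN v D != set0.

Definition IR_set (X : {set T}) : Prop :=
  irredundant X /\ forall D : {set T}, irredundant D -> #|D| <= #|X|.

Definition isolated_in (X : {set T}) (z : T) : Prop := forall x, x \in X -> ~~ e z x.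

(* X' is a flip-set of X: X = Y (disjoint union) Z, vertices of Z isolated in G[X],
   each y in Y gets a chosen y' = f y in EPN(y,X), Y' = f @: Y, X' = (X - Y) u Y'. *)
Definition flip_set (X X' : {set T}) : Prop :=
  exists (Y Z : {set T}) (f : T -> T),
    [/\ [disjoint Y & Z], X = Y :|: Z,
        (forall z, z \in Z -> isolated_in X z),
        (forall y, y \in Y -> f y \in EPN y X) &
        X' = (X :\: Y) :|: (f @: Y)].
End Graph.

From mathcomp Require Import all_boot.

Set Implicit Arguments.
Unset Strict Implicit.
Unset Printing Implicit Defensive.

(* If every vertex x of a set X is sent to one of its own private neighbours
   g x in PN(x, X), then x is a private neighbour of g x with respect to the
   image g(X): x lies in N[g x], and x in N[g x'] would put g x' in N[x],
   contradicting that g x' is private to x'.  Hence g(X) is irredundant, and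
   g is injective on X because private neighbours have a unique owner, so
   |g(X)| = |X| and maximality passes from X to g(X).  A flip-set is such
   an image: g = f on Y, and g = id on the isolated vertices, each of which
   is its own private neighbour. *)

Section PrivateNeighbours.

Variables (T : finType) (e : rel T).

Lemma mem_cnbhd (u v : T) : (u \in cnbhd e v) = (u == v) || e v u.
Proof. by rewrite inE. Qed.

Lemma PNP (u v : T) (D : {set T}) :
  reflect (u \in cnbhd e v /\ {in D :\ v, forall w, u \notin cnbhd e w})
          (u \in PN e v D).
Proof.
rewrite in_setD andbC; apply: (iffP andP) => [[uNv /bigcupP uND] | [uNv uND]].
  by split=> // w wD; apply/negP=> uNw; apply: uND; exists w.
by split=> //; apply/bigcupP=> -[w wD]; apply/negP; apply: uND.
Qed.

Lemma PN_owner_unique (u v w : T) (D : {set T}) :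
  v \in D -> u \in PN e v D -> u \in PN e w D -> v = w.
Proof.
move=> vD /PNP[uNv _] /PNP[_ uND]; apply/eqP.
by apply: contraLR uNv => vw; apply: uND; rewrite !inE vw.
Qed.

Hypothesis e_sym : symmetric e.

Lemma cnbhd_sym (u v : T) : (u \in cnbhd e v) = (v \in cnbhd e u).
Proof. by rewrite !mem_cnbhd eq_sym e_sym. Qed.

Lemma isolated_in_PN (X : {set T}) (z : T) :
  isolated_in e X z -> z \in PN e z X.
Proof.
move=> zX; apply/PNP; split=> [|w]; first by rewrite mem_cnbhd eqxx.
rewrite !inE => /andP[wz wX]; rewrite eq_sym (negbTE wz) e_sym.
exact: zX.
Qed.

Section PrivateImage.

Variables (X : {set T}) (g : T -> T).
Hypothesis g_PN : {in X, forall x, g x \in PN e x X}.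

Lemma PN_image_inj : {in X &, injective g}.
Proof.
move=> x1 x2 x1X x2X g12; apply: (PN_owner_unique x1X (g_PN x1X)).
by rewrite g12 g_PN.
Qed.

Lemma mem_PN_image (x : T) : x \in X -> x \in PN e (g x) (g @: X).
Proof.
move=> xX; apply/PNP; split=> [|w /setD1P[wgx /imsetP[y yX wE]]].
  by rewrite cnbhd_sym; case/PNP: (g_PN xX).
have yx : x != y by apply: contraNneq wgx => xy; rewrite wE xy.
rewrite {}wE cnbhd_sym; case/PNP: (g_PN yX) => _; apply.
by rewrite !inE yx.
Qed.

Lemma irredundant_PN_image : irredundant e (g @: X).
Proof.
by move=> _ /imsetP[x xX ->]; apply/set0Pn; exists x; apply: mem_PN_image.
Qed.

Lemma card_PN_image : #|g @: X| = #|X|.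
Proof. exact: card_in_imset PN_image_inj. Qed.

End PrivateImage.

Lemma flip_set_PN_image (X X' : {set T}) :
  flip_set e X X' ->
  exists g : T -> T, {in X, forall x, g x \in PN e x X} /\ X' = g @: X.
Proof.
case=> Y [Z [f [_ defX Z_iso f_EPN ->]]].
have YX : Y \subset X by rewrite defX subsetUl.
exists (fun x => if x \in Y then f x else x); split.
  move=> x xX; case: ifPn => [xY | xNY].
    by move: (f_EPN x xY); rewrite inE => /andP[].
  by apply/isolated_in_PN/Z_iso; move: xX; rewrite defX inE (negbTE xNY).
rewrite -{2}(setID X Y) (setIidPr YX) imsetU setUC; congr (_ :|: _).
  by apply: eq_in_imset => x ->.
by rewrite -[LHS]imset_id; apply: eq_in_imset => x; rewrite inE => /andP[/negbTE ->].
Qed.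

End PrivateNeighbours.

Theorem proposition2p2 (T : finType) (e : rel T) (X X' : {set T}) :
  simple_graph e -> IR_set e X -> flip_set e X X' -> IR_set e X'.
Proof.
move=> [e_sym _] [_ X_max] /(flip_set_PN_image e_sym)[g [g_PN ->]].
split; first exact: irredundant_PN_image.
by rewrite (card_PN_image g_PN).
Qed.
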